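(* Let $m_1,\dots,m_n$ be odd integers, each greater than $1$, and let $-1$ denote the element $(-1,\dots,-1)$ of $U=\prod_{i=1}^n\operatorname{U}_{m_i}$. The short exact sequence $1\to\{\pm1\}\to U\to U/\{\pm1\}\to 1$ splits (equivalently, $\{\pm1\}$ has a complement in $U$) if and only if there exist $1\le j\le n$ and a prime $p\equiv 3\pmod 4$ with $p\mid m_j$.
   Context: $\operatorname{U}_m$ denotes the multiplicative group of units of $\mathbb Z/m\mathbb Z$. *)

From HB Require Import structures.
From mathcomp Require Import all_boot all_order all_algebra all_fingroup.
Set Implicit Arguments. Unset Strict Implicit. Unset Printing Implicit Defensive.
Import GRing.Theory.

Section DProdGroup.
Variables (I : finType) (G : I -> finGroupType).

Definition dprodg_type := {dffun forall i : I, G i}.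
HB.instance Definition _ := Finite.on dprodg_type.

Definition dprodg_one : dprodg_type := [ffun i => 1%g].
Definition dprodg_mul (x y : dprodg_type) : dprodg_type := [ffun i => (x i * y i)%g].
Definition dprodg_inv (x : dprodg_type) : dprodg_type := [ffun i => (x i)^-1%g].

Lemma dprodg_mulA : associative dprodg_mul.
Proof. by move=> x y z; apply/ffunP=> i; rewrite !ffunE mulgA. Qed.
Lemma dprodg_mul1 : left_id dprodg_one dprodg_mul.
Proof. by move=> x; apply/ffunP=> i; rewrite !ffunE mul1g. Qed.
Lemma dprodg_mulV : left_inverse dprodg_one dprodg_inv dprodg_mul.
Proof. by move=> x; apply/ffunP=> i; rewrite !ffunE mulVg. Qed.

HB.instance Definition _ :=
  Finite_isGroup.Build dprodg_type dprodg_mulA dprodg_mul1 dprodg_mulV.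
End DProdGroup.

(* U_m, the unit group of Z/mZ (for m > 1, 'Z_m is Z/mZ). *)
Definition Um (m : nat) : finGroupType := {unit 'Z_m}.

Definition Um_m1 (m : nat) : Um m := FinRing.unit 'Z_m (unitrN1 'Z_m).

Definition Uprod (n : nat) (m : 'I_n -> nat) : finGroupType :=
  dprodg_type (fun i : 'I_n => Um (m i)).

Definition Uprod_m1 (n : nat) (m : 'I_n -> nat) : Uprod m :=
  [ffun i => Um_m1 (m i)].

From HB Require Import structures.
From mathcomp Require Import all_boot all_order all_algebra all_fingroup all_solvable all_field.
From mathcomp Require Import zify ring.
Set Implicit Arguments. Unset Strict Implicit. Unset Printing Implicit Defensive.
Import GRing.Theory FinRing.Theory.

(* Let x = (-1, ..., -1) in U = prod_i U_(m_i), an involution of the abelian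
   group U.  The proof rests on two group-theoretic criteria:
   - if x = y^2 for some y, then <x> has no complement: writing y = a h with
     a in <x> and h in a complement H gives x = y^2 = h^2 in H, so x = 1;
   - if a multiplicative map chi : U -> {1, -1} sends x to -1, then its
     kernel is a complement of <x>.
   If a prime p = 3 (mod 4) divides m_j, the Euler character
   u |-> (u_j mod p)^((p-1)/2) satisfies the second criterion, since
   (-1)^((p-1)/2) = -1.  Otherwise every prime divisor of every m_i is
   1 (mod 4), and -1 is a square modulo each m_i: modulo such a prime p
   because the cyclic group F_p^* has an element of order 4, modulo p^k by
   Hensel lifting, and modulo m_i by the Chinese remainder theorem; hence x
   is a square in U and the first criterion applies. *)

Definition sqrtN1_mod (d : nat) : Prop := exists a, d %| a ^ 2 + 1.

(* In a finite field whose unit group has order divisible by 4, -1 is a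
   square: take the square root of the square of an element of order 4. *)
Lemma finField_sqrtN1 (F : finFieldType) :
  4 %| #|F|.-1 -> exists z : F, (z ^+ 2 = -1)%R.
Proof.
have /cyclicP [g defU] := field_unit_group_cyclic [set: {unit F}]%G.
have ord_g : #[g]%g = #|F|.-1 by rewrite /order -defU card_finField_unit.
rewrite -ord_g => /dvdnP [q ord_g4].
have q_gt0 : 0 < q by have := order_gt0 g; rewrite ord_g4; lia.
set h := (g ^+ q)%g.
have ord_h : #[h]%g = 4 by rewrite orderXdiv ord_g4 ?mulKn ?dvdn_mulr.
exists (val h); rewrite -val_unitX; apply/eqP.
have : (val (h ^+ 2)%g ^+ 2 == 1)%R.
  by rewrite -val_unitX -val_unit1 val_eqE -expgM -order_dvdn ord_h.
rewrite sqrf_eq1 => /orP [/eqP h2_1|//].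
have : (h ^+ 2 == 1)%g by apply/eqP/val_inj; rewrite h2_1.
by rewrite -order_dvdn ord_h.
Qed.

Lemma sqrtN1_mod_prime p : prime p -> p %% 4 = 1 -> sqrtN1_mod p.
Proof.
move=> p_pr p_mod4.
have dvd4 : 4 %| #|'F_p|.-1 by rewrite card_Fp // /dvdn; lia.
have [z z2] := finField_sqrtN1 dvd4.
exists (z : nat); rewrite (dvdn_pcharf (pchar_Fp p_pr)) natrD natrX natr_Zp z2.
by rewrite addNr.
Qed.

(* Hensel lifting: a square root a of -1 modulo p^k lifts to the square root
   a + u c p^k modulo p^(k+1), where a^2 + 1 = c p^k and 2 a u = -1 (mod p). *)
Lemma sqrtN1_mod_lift p k : prime p -> odd p -> 0 < k ->
  sqrtN1_mod (p ^ k) -> sqrtN1_mod (p ^ k.+1).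
Proof.
move=> p_pr p_odd k_gt0 [a dvd_a].
have p_coprime_2a : coprime p (2 * a).
  rewrite coprimeMr coprimen2 p_odd prime_coprime //=; apply/negP => dvd_pa.
  have : p %| a ^ 2 + 1 by apply: dvdn_trans dvd_a; rewrite dvdn_exp.
  by rewrite dvdn_addr ?dvdn_exp // dvdn1 => /eqP p1; rewrite p1 in p_pr.
have [u _ bezout] := Bezoutl (2 * a) (prime_gt0 p_pr).
rewrite (eqnP p_coprime_2a) in bezout.
set c := (a ^ 2 + 1) %/ p ^ k.
have def_c : a ^ 2 + 1 = c * p ^ k by rewrite divnK.
exists (a + u * c * p ^ k).
have -> : (a + u * c * p ^ k) ^ 2 + 1
          = p ^ k * (c * (1 + u * (2 * a))) + (u * c) ^ 2 * (p ^ k * p ^ k).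
  have -> : (a + u * c * p ^ k) ^ 2 + 1
            = (a ^ 2 + 1) + 2 * a * (u * c * p ^ k) + (u * c * p ^ k) ^ 2 by ring.
  by rewrite def_c; ring.
rewrite expnS; apply: dvdn_add.
  by rewrite mulnC dvdn_mul // dvdn_mull.
by rewrite dvdn_mull // dvdn_mul // -[X in X %| _]expn1 dvdn_exp2l.
Qed.

Lemma sqrtN1_mod_pexp p k : prime p -> odd p -> sqrtN1_mod p -> sqrtN1_mod (p ^ k).
Proof.
move=> p_pr p_odd sqrt_p; elim: k => [|[|k] IHk]; first by exists 0.
  by rewrite expn1.
exact: sqrtN1_mod_lift.
Qed.

Lemma sqrtN1_mod_mul d1 d2 : coprime d1 d2 ->
  sqrtN1_mod d1 -> sqrtN1_mod d2 -> sqrtN1_mod (d1 * d2).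
Proof.
move=> co12 [a1 dvd1] [a2 dvd2].
have congr d a b : a = b %[mod d] -> d %| a ^ 2 + 1 -> d %| b ^ 2 + 1.
  by move=> eq_ab; rewrite /dvdn -modnDml -modnXm eq_ab modnXm modnDml.
exists (chinese d1 d2 a1 a2); rewrite Gauss_dvd //.
by rewrite (congr _ _ _ (esym (chinese_modl co12 a1 a2)) dvd1)
           (congr _ _ _ (esym (chinese_modr co12 a1 a2)) dvd2).
Qed.

(* -1 is a square modulo any m > 0 whose prime divisors are all 1 (mod 4);
   induction on m, splitting off the p-part of its least prime divisor p. *)
Lemma sqrtN1_mod_primes_1mod4 m : 0 < m ->
  (forall p, prime p -> p %| m -> p %% 4 = 1) -> sqrtN1_mod m.
Proof.
elim/ltn_ind: m => m IHm m_gt0 primes_m.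
have [m_le1|m_gt1] := leqP m 1; first by exists 0; have -> : m = 1 by lia.
set p := pdiv m; have p_pr : prime p := pdiv_prime m_gt1.
have p_dvd_m : p %| m := pdiv_dvd m.
have [m' co_pm' def_m] := pfactor_coprime p_pr m_gt0.
have m'_gt0 : 0 < m' by move: m_gt0; rewrite def_m muln_gt0 => /andP[].
have p_mod4 := primes_m p p_pr p_dvd_m.
have p_odd : odd p by lia.
have sqrt_m' : sqrtN1_mod m'.
  apply: IHm => // [|q q_pr q_dvd]; last by apply: primes_m; rewrite // def_m dvdn_mulr.
  rewrite def_m -{1}(muln1 m') ltn_mul2l m'_gt0 /= -(expn0 p) ltn_exp2l ?prime_gt1 //.
  by rewrite logn_gt0 mem_primes p_pr m_gt0 p_dvd_m.
rewrite def_m mulnC; apply: sqrtN1_mod_mul; rewrite ?coprimeXl //.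
exact/sqrtN1_mod_pexp/sqrtN1_mod_prime.
Qed.

Section InvolutionComplement.
Local Open Scope group_scope.
Variables (gT : finGroupType) (G : {group gT}) (x : gT).
Hypotheses (Gx : x \in G) (xx1 : x * x = 1).

Lemma mem_cycle_involution y : y \in <[x]> -> y = 1 \/ y = x.
Proof.
case/cycleP => i ->; have x2 : x ^+ 2 = 1 by rewrite expgS expg1.
rewrite (divn_eq i 2) expgD mulnC expgM x2 expg1n mul1g.
have : i %% 2 < 2 by rewrite ltn_pmod.
by case: (i %% 2) => [|[|//]] _; [left | right; rewrite expg1].
Qed.

Lemma square_involution_no_complement y :
  abelian G -> y \in G -> x = y * y -> [splits G, over <[x]>] -> x = 1.
Proof.
move=> cGG Gy def_x /splitsP [H /complP [tiXH defG]].
have : y \in <[x]> * H by rewrite defG.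
case/mulsgP => a h Xa Hh def_y.
have aa1 : a * a = 1.
  by case: (mem_cycle_involution Xa) => ->; rewrite ?mulg1.
have Hx : x \in H.
  have Ga : a \in G by apply: subsetP Xa; rewrite cycle_subG.
  have Gh : h \in G by apply: subsetP Hh; rewrite -defG mulG_subr.
  have cah : commute a h := centsP cGG a Ga h Gh.
  rewrite def_x def_y -mulgA (mulgA h) -cah -!mulgA mulgA aa1 mul1g.
  exact: groupM.
by apply/set1gP; rewrite -tiXH inE cycle_id Hx.
Qed.

Lemma character_complement (R : nzRingType) (chi : gT -> R) :
  {in G &, {morph chi : u v / u * v >-> (u * v)%R}} -> chi 1 = 1%R ->
  chi x = (-1)%R -> (-1 != 1 :> R)%R ->
  {in G, forall u, chi u = 1%R \/ chi u = (-1)%R} -> [splits G, over <[x]>].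
Proof.
move=> chiM chi1 chix N1_neq1 chi_sign.
have K_group : group_set [set u in G | chi u == 1%R].
  apply/group_setP; split=> [|u v]; first by rewrite inE group1 chi1 eqxx.
  rewrite !inE => /andP [Gu /eqP chiu] /andP [Gv /eqP chiv].
  by rewrite groupM // chiM // chiu chiv mulr1 eqxx.
set K := Group K_group.
have sKG : K \subset G by apply/subsetP => u; rewrite inE => /andP[].
apply/splitsP; exists K; apply/complP; split.
  apply/eqP; rewrite eqEsubset sub1G andbT; apply/subsetP => u /setIP [Xu Ku].
  case: (mem_cycle_involution Xu) Ku => ->; rewrite ?inE //.
  by rewrite chix (negbTE N1_neq1) andbF.
apply/eqP; rewrite eqEsubset mul_subG ?cycle_subG //=; apply/subsetP => u Gu.
case: (chi_sign u Gu) => chiu.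
  by rewrite -[u]mul1g mem_mulg // inE Gu chiu eqxx.
rewrite -[u]mul1g -xx1 -mulgA mem_mulg ?cycle_id // inE groupM //.
by rewrite chiM // chix chiu mulrNN mulr1 eqxx.
Qed.

End InvolutionComplement.

Local Open Scope ring_scope.

Lemma oppr1_neq1 (R : nzRingType) : 2%:R != 0 :> R -> -1 != 1 :> R.
Proof. by apply: contra => /eqP N1_1; rewrite mulr2n -{1}N1_1 addNr. Qed.

Lemma Zp_oppr1_neq1 M : (2 < M)%N -> -1 != 1 :> 'Z_M.
Proof.
move=> M_gt2; apply: oppr1_neq1; apply/eqP => /(congr1 (@nat_of_ord _)).
by rewrite val_Zp_nat ?modn_small //; lia.
Qed.

Lemma Fp_oppr1_neq1 p : prime p -> odd p -> -1 != 1 :> 'F_p.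
Proof.
move=> p_pr p_odd; apply: oppr1_neq1; rewrite -(dvdn_pcharf (pchar_Fp p_pr)).
by apply/negP => /dvdn_leq; have := prime_gt1 p_pr; lia.
Qed.

Section Reduction.
Variables (M p : nat).
Hypotheses (M_gt1 : (1 < M)%N) (p_pr : prime p) (p_dvd_M : (p %| M)%N).

Definition redp (x : 'Z_M) : 'F_p := (val x)%:R.

Lemma natr_modulus_Fp : M%:R = 0 :> 'F_p.
Proof. by apply/eqP; rewrite -(dvdn_pcharf (pchar_Fp p_pr)). Qed.

Lemma redp_natmod k : ((k %% M)%N%:R : 'F_p) = k%:R.
Proof. by rewrite [in RHS](divn_eq k M) natrD natrM natr_modulus_Fp mulr0 add0r. Qed.

Lemma redpM x y : redp (x * y) = redp x * redp y.
Proof. by rewrite /redp /= [X in (_ %% X)%N]Zp_cast // redp_natmod natrM. Qed.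

Lemma redp1 : redp 1 = 1.
Proof. by rewrite /redp /= [X in (_ %% X)%N]Zp_cast // modn_small. Qed.

Lemma redpN1 : redp (-1) = -1.
Proof.
rewrite /redp /= [(1 %% _)%N]modn_small // subn1 /= modn_small //.
by apply/eqP; rewrite -addr_eq0 -(natrD _ _ 1) addn1 Zp_cast // natr_modulus_Fp.
Qed.

Lemma redp_unit (u : {unit 'Z_M}) : redp (val u) != 0.
Proof.
apply/eqP => redp_u0.
have : redp (val u * val (u^-1)%g) = 1 by rewrite -val_unitM mulgV val_unit1 redp1.
by rewrite redpM redp_u0 mul0r => /eqP; rewrite eq_sym oner_eq0.
Qed.

End Reduction.

Section EulerCharacter.
Variable p : nat.
Hypotheses (p_pr : prime p) (p_odd : odd p).

Definition euler_char (t : 'F_p) : 'F_p := t ^+ p.-1./2.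

Lemma euler_char_sign t : t != 0 -> euler_char t = 1 \/ euler_char t = -1.
Proof.
move=> t_neq0.
have fermat : t ^+ p.-1 = 1.
  apply: (mulfI t_neq0); rewrite -exprS prednK ?prime_gt0 // mulr1.
  by have := expf_card t; rewrite card_Fp.
have : euler_char t ^+ 2 == 1 by rewrite -exprM (_ : _ * 2 = p.-1)%N ?fermat //; lia.
by rewrite sqrf_eq1 => /orP [] /eqP; [left | right].
Qed.

Lemma euler_charN1 : (p %% 4 = 3)%N -> euler_char (-1) = -1.
Proof. by move=> p_mod4; rewrite /euler_char -signr_odd (_ : odd _ = true) //; lia. Qed.

End EulerCharacter.

Lemma Um_sqrtN1 M : (1 < M)%N -> sqrtN1_mod M -> exists w : Um M, (w * w)%g = Um_m1 M.
Proof.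
move=> M_gt1 [a dvd_a]; set z : 'Z_M := a%:R.
have zz : z * z = -1.
  apply/eqP; rewrite -addr_eq0 -expr2 -natrX -(natrD _ _ 1).
  by apply/eqP/val_inj; rewrite /= val_Zp_nat // (eqP dvd_a).
have z_unit : z \is a GRing.unit.
  by apply/unitrP; exists (- z); rewrite mulrN mulNr zz opprK.
by exists (FinRing.unit _ z_unit); apply/val_inj; rewrite val_unitM /= zz.
Qed.

Section UnitProduct.
Variables (n : nat) (m : 'I_n -> nat).

Lemma Uprod_mulE (u v : Uprod m) i : (u * v)%g i = (u i * v i)%g.
Proof. by rewrite /= ffunE. Qed.

Lemma Uprod_oneE i : (1 : Uprod m)%g i = 1%g.
Proof. by rewrite /= ffunE. Qed.

Lemma Uprod_abelian : abelian [set: Uprod m].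
Proof.
apply/centsP => u _ v _; apply/ffunP => i.
by rewrite !Uprod_mulE; apply: val_inj; rewrite !val_unitM mulrC.
Qed.

Lemma Uprod_m1E i : val (Uprod_m1 m i) = -1.
Proof. by rewrite ffunE. Qed.

Lemma Uprod_m1_involution : (Uprod_m1 m * Uprod_m1 m = 1)%g.
Proof.
apply/ffunP => i; rewrite Uprod_mulE Uprod_oneE; apply: val_inj.
by rewrite val_unitM Uprod_m1E mulrNN mulr1.
Qed.

Lemma Uprod_m1_neq1 i : (2 < m i)%N -> Uprod_m1 m != 1%g.
Proof.
move=> m_gt2; apply: contraNneq (Zp_oppr1_neq1 m_gt2) => m1_eq1.
by rewrite -(Uprod_m1E i) m1_eq1 Uprod_oneE.
Qed.

Lemma Uprod_m1_square :
  (forall i, (1 < m i)%N /\ sqrtN1_mod (m i)) -> exists y, Uprod_m1 m = (y * y)%g.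
Proof.
move=> sqrt_m; have [w ww] := fin_all_exists (fun i => Um_sqrtN1 (sqrt_m i).1 (sqrt_m i).2).
exists [ffun i => w i]; apply/ffunP => i.
by rewrite Uprod_mulE !ffunE ww.
Qed.

End UnitProduct.

Section Splitting.
Variables (n : nat) (m : 'I_n -> nat).
Hypothesis m_odd_gt1 : forall i, odd (m i) /\ (1 < m i)%N.

Lemma splits_of_prime_3mod4 j p : prime p -> (p %% 4 = 3)%N -> (p %| m j)%N ->
  [splits [set: Uprod m], over <[Uprod_m1 m]>]%g.
Proof.
move=> p_pr p_mod4 p_dvd_m.
have m_gt1 := (m_odd_gt1 j).2; have p_odd : odd p by lia.
pose chi (u : Uprod m) := euler_char (redp p (val (u j))).
apply: (@character_complement _ _ _ (in_setT _) (Uprod_m1_involution m) _ chi).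
- by move=> u v _ _; rewrite /chi Uprod_mulE val_unitM redpM // -exprMn.
- by rewrite /chi Uprod_oneE val_unit1 redp1 // /euler_char expr1n.
- by rewrite /chi Uprod_m1E redpN1 // euler_charN1.
- exact: Fp_oppr1_neq1.
- by move=> u _; apply: euler_char_sign; rewrite ?redp_unit.
Qed.

Lemma no_split_of_primes_1mod4 : (0 < n)%N ->
  (forall j p, prime p -> (p %| m j)%N -> (p %% 4 = 1)%N) ->
  ~ [splits [set: Uprod m], over <[Uprod_m1 m]>]%g.
Proof.
move=> n_gt0 primes_1mod4 splitU.
have [|y def_m1] := @Uprod_m1_square n m.
  move=> i; have m_gt1 := (m_odd_gt1 i).2.
  by split; last exact: sqrtN1_mod_primes_1mod4 (ltnW m_gt1) (primes_1mod4 i).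
have m_gt2 : (2 < m (Ordinal n_gt0))%N by have := m_odd_gt1 (Ordinal n_gt0); lia.
have m1_eq1 := square_involution_no_complement (in_setT _)
  (Uprod_m1_involution m) (Uprod_abelian m) (in_setT y) def_m1 splitU.
by have := Uprod_m1_neq1 m_gt2; rewrite m1_eq1 eqxx.
Qed.

(* Odd prime divisors are 1 or 3 (mod 4): either some m_j has a prime
   divisor p = 3 (mod 4), or all prime divisors of all m_i are 1 (mod 4). *)
Lemma prime_divisors_mod4 :
  (exists j p, [/\ prime p, (p %% 4 = 3)%N & (p %| m j)%N]) \/
  (forall j p, prime p -> (p %| m j)%N -> (p %% 4 = 1)%N).
Proof.
case: (boolP [exists j, has (fun p => p %% 4 == 3)%N (primes (m j))]).
  case/existsP => j /hasP [p]; rewrite mem_primes => /and3P [p_pr _ p_dvd] /eqP p_mod4.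
  by left; exists j, p.
rewrite negb_exists => /forallP no_3mod4; right => j p p_pr p_dvd.
have p_odd := dvdn_odd p_dvd (m_odd_gt1 j).1.
have m_gt0 : (0 < m j)%N by have := (m_odd_gt1 j).2; lia.
have /hasPn /(_ p) := no_3mod4 j; rewrite mem_primes p_pr m_gt0 p_dvd => /(_ isT).
lia.
Qed.

End Splitting.

Local Close Scope ring_scope.

Theorem lemma4p2 (n : nat) (m : 'I_n -> nat) :
  0 < n ->
  (forall i, odd (m i) /\ 1 < m i) ->
  [splits [set: Uprod m], over <[Uprod_m1 m]>]%g <->
  (exists (j : 'I_n) (p : nat), [/\ prime p, p %% 4 = 3 & p %| m j]).
Proof.
move=> n_gt0 m_odd_gt1; split; last first.
  by case=> j [p [p_pr p_mod4 p_dvd]]; exact: splits_of_prime_3mod4 p_dvd.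
move=> splitU; case: (prime_divisors_mod4 m_odd_gt1) => [//|primes_1mod4].
by case: (no_split_of_primes_1mod4 m_odd_gt1 n_gt0 primes_1mod4).
Qed.
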